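(* Let $\mathsf C$ be a rainbow cycle and let $\mathsf X$ be either a rainbow cycle or a bad piece. Assume that $\chi(\mathsf X)\cap\chi(\mathsf C\setminus\mathsf X)=\emptyset$, that $E(\mathsf C)\setminus E(\mathsf X)\neq\emptyset$, and that $|V(\mathsf C)\cap V(\mathsf X)|\ge 2$. Then there is a rainbow even cycle all of whose (colored) edges belong to $\mathsf C\cup\mathsf X$.
   Context: A (colored) graph is a finite set $\mathsf G$ of pairs $(e,\alpha)$, where the $e$'s are pairwise distinct 2-element subsets of a vertex set and $\alpha$ is a color (colors may repeat). $V(\mathsf G)$, $E(\mathsf G)$, $\chi(\mathsf G)$ denote its vertex set, its set of underlying uncolored edges, and its set of colors; $\mathsf C\setminus\mathsf X$ is set difference of colored edges. $\mathsf G$ is rainbow if $|\chi(\mathsf G)|=|\mathsf G|$ and almost rainbow if $|\chi(\mathsf G)|=|\mathsf G|-1$. Paths and cycles are colored graphs whose underlying uncolored edges form a path (with two distinct terminals) or a cycle; an even cycle has an even number of edges. A theta graph is a union $\mathsf P_1\cup\mathsf P_2\cup\mathsf P_3$ of three paths with the same terminals $s\neq t$ such that any two of them share no vertex other than $s,t$ and no underlying uncolored edge. A bad piece is an almost rainbow theta graph with at least $6$ vertices that is the union of three rainbow paths $\mathsf P_1,\mathsf P_2,\mathsf P_3$ as in the definition of a theta graph. *)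

From mathcomp Require Import all_boot.
Set Implicit Arguments. Unset Strict Implicit. Unset Printing Implicit Defensive.

Section ColoredGraphs.
Variables (T K : finType).

Definition cedge := ({set T} * K)%type.
Definition cgraph := {set cedge}.

Definition is_graph (G : cgraph) : Prop :=
  (forall p, p \in G -> #|p.1| = 2) /\
  (forall p q, p \in G -> q \in G -> p.1 = q.1 -> p = q).

Definition Vtx (G : cgraph) : {set T} := \bigcup_(p in G) p.1.
Definition Edg (G : cgraph) : {set {set T}} := [set p.1 | p in G].
Definition Col (G : cgraph) : {set K} := [set p.2 | p in G].

Definition rainbow (G : cgraph) : Prop := #|Col G| = #|G|.
Definition almost_rainbow (G : cgraph) : Prop := #|Col G|.+1 = #|G|.

Definition path_edges (s : seq T) : {set {set T}} :=
  [set [set x.1; x.2] | x in zip s (behead s)].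
Definition cycle_edges (s : seq T) : {set {set T}} :=
  [set [set x.1; x.2] | x in zip s (rot 1 s)].

Definition is_path (G : cgraph) (a b : T) : Prop :=
  is_graph G /\
  exists q : seq T,
    [/\ a != b, uniq (a :: q), last a q = b & Edg G = path_edges (a :: q)].

Definition is_cycle (G : cgraph) : Prop :=
  is_graph G /\
  exists s : seq T, [/\ uniq s, 3 <= size s & Edg G = cycle_edges s].

Definition even_cycle (G : cgraph) : Prop := is_cycle G /\ ~~ odd #|G|.

Definition theta_of (G P1 P2 P3 : cgraph) (s t : T) : Prop :=
  [/\ is_graph G, G = P1 :|: P2 :|: P3,
      [/\ is_path P1 s t, is_path P2 s t & is_path P3 s t],
      [/\ Vtx P1 :&: Vtx P2 \subset [set s; t],
          Vtx P1 :&: Vtx P3 \subset [set s; t] &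
          Vtx P2 :&: Vtx P3 \subset [set s; t]] &
      [/\ Edg P1 :&: Edg P2 = set0,
          Edg P1 :&: Edg P3 = set0 &
          Edg P2 :&: Edg P3 = set0]].

Definition is_theta (G : cgraph) : Prop :=
  exists P1 P2 P3 s t, theta_of G P1 P2 P3 s t.

Definition bad_piece (G : cgraph) : Prop :=
  [/\ almost_rainbow G, 6 <= #|Vtx G| &
      exists P1 P2 P3 s t,
        [/\ theta_of G P1 P2 P3 s t, rainbow P1, rainbow P2 & rainbow P3]].

End ColoredGraphs.

From mathcomp Require Import all_boot.
Set Implicit Arguments. Unset Strict Implicit. Unset Printing Implicit Defensive.

(* Since [C] meets [V(X)] in at least two vertices and has an edge outside
   [E(X)], it contains an ear of [X]: a path between two distinct vertices of
   [X] whose interior avoids [V(X)] and whose edges are not edges of [X]. By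
   the color hypothesis, any rainbow part of [X] together with the edges of
   [C] outside [E(X)] is rainbow, so it suffices to find an even cycle in such
   a graph. Three internally disjoint paths between two vertices always
   contain an even cycle, as two of them have lengths of equal parity.
   If [X] is a rainbow cycle, the ear and the two arcs of [X] between its ends
   are such paths. If [X] is a bad piece, the two edges of equal color lie on
   different paths [Pa], [Pb] of the theta graph, and deleting either edge
   leaves [X] rainbow. If both ends of the ear lie on the cycle [Pa + Pc] (or
   [Pb + Pc]) we argue as before inside [X] minus the edge on [Pb] (or [Pa]);
   otherwise the ear joins the interiors of [Pa] and [Pb], and prolonging it
   along the half of [Pb] that avoids the deleted edge gives an ear of
   [Pa + Pc]. *)

Section EvenCycles.
Variable T : eqType.
Implicit Types (e : rel T) (s t x y u w : T) (a b c d l q : seq T).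

Definition even_ucycle e c := [&& ucycleb e c, 2 < size c & ~~ odd (size c)].

Lemma rev_path_rcons e u q w :
  symmetric e -> path e u (rcons q w) -> path e w (rcons (rev q) u).
Proof.
move=> eC; have := rev_path e u (rcons q w).
rewrite last_rcons belast_rcons rev_cons => ->.
by rewrite (eq_path (e' := e)) // => ? ?; apply: eC.
Qed.

Lemma uniq_rev_path u q w : uniq (u :: rcons q w) = uniq (w :: rcons (rev q) u).
Proof. by rewrite -rev_uniq rev_cons rev_rcons. Qed.

Lemma uniq_path_ends u q w : uniq (u :: rcons q w) ->
  [/\ u != w, uniq q & {in q, forall v, (v != u) && (v != w)}].
Proof.
rewrite /= mem_rcons inE negb_or rcons_uniq => /andP [/andP [uw uq] /andP [wq Uq]].
split=> // v vq; apply/andP; split.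
- by apply: contraNneq uq => <-.
- by apply: contraNneq wq => <-.
Qed.

Lemma rev_eq_nil l : (rev l == [::]) = (l == [::]).
Proof. by rewrite -!size_eq0 size_rev. Qed.

Lemma size_arcs x a y b : (2 < size (x :: a ++ y :: b)) = (a != [::]) || (b != [::]).
Proof. by rewrite /= size_cat /= addnS !ltnS addn_gt0 !lt0n !size_eq0. Qed.

Lemma cycle_arcs e x a y b :
  cycle e (x :: a ++ y :: b) = path e x (rcons a y) && path e y (rcons b x).
Proof. by rewrite /= rcons_cat cat_path /= !rcons_path !andbA. Qed.

Lemma uniq_arcs x a y b :
  uniq (x :: a ++ y :: b) -> uniq (x :: rcons a y) /\ uniq (y :: rcons b x).
Proof.
have uniq_prefix a1 z b1 : uniq (a1 ++ z :: b1) -> uniq (rcons a1 z).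
  by rewrite -cat_rcons cat_uniq => /andP [].
move=> U; split; first exact: (uniq_prefix (x :: a) y b U).
by apply: (uniq_prefix (y :: b) x a); rewrite uniq_catC.
Qed.

Lemma cycle_of_paths e s t l1 l2 :
  symmetric e -> path e s (rcons l1 t) -> path e s (rcons l2 t) ->
  cycle e (s :: l1 ++ t :: rev l2).
Proof. by move=> eC P1 P2; rewrite cycle_arcs P1 rev_path_rcons. Qed.

Lemma uniq_of_paths s t l1 l2 :
  uniq (s :: rcons l1 t) -> uniq (s :: rcons l2 t) -> {in l1, forall v, v \notin l2} ->
  uniq (s :: l1 ++ t :: rev l2).
Proof.
move=> U1 /uniq_path_ends [_ U2 l2st] D.
rewrite -cat_rcons -cat_cons cat_uniq U1 rev_uniq U2 andbT.
apply/hasPn => v; rewrite mem_rev => vl2; have /andP [vs vt] := l2st v vl2.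
by rewrite inE mem_rcons inE (negbTE vs) (negbTE vt) /=; apply: contraL vl2 => /D.
Qed.

Lemma even_ucycle_of_paths e s t l1 l2 :
  symmetric e -> path e s (rcons l1 t) -> path e s (rcons l2 t) ->
  uniq (s :: rcons l1 t) -> uniq (s :: rcons l2 t) -> {in l1, forall v, v \notin l2} ->
  (l1 != [::]) || (l2 != [::]) -> odd (size l1) = odd (size l2) ->
  exists d, even_ucycle e d.
Proof.
move=> eC P1 P2 U1 U2 D N E; exists (s :: l1 ++ t :: rev l2).
rewrite /even_ucycle /ucycleb cycle_of_paths // uniq_of_paths // size_arcs rev_eq_nil N.
by rewrite /= size_cat /= size_rev addnS /= negbK oddD E addbb.
Qed.

(* Two of the three paths have lengths of equal parity. *)
Lemma theta_even_ucycle e s t l1 l2 l3 :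
  symmetric e ->
  path e s (rcons l1 t) -> path e s (rcons l2 t) -> path e s (rcons l3 t) ->
  uniq (s :: rcons l1 t) -> uniq (s :: rcons l2 t) -> uniq (s :: rcons l3 t) ->
  {in l1, forall v, v \notin l2} -> {in l1, forall v, v \notin l3} ->
  {in l2, forall v, v \notin l3} ->
  (l1 != [::]) || (l2 != [::]) -> (l1 != [::]) || (l3 != [::]) ->
  (l2 != [::]) || (l3 != [::]) ->
  exists d, even_ucycle e d.
Proof.
move=> eC P1 P2 P3 U1 U2 U3 D12 D13 D23 N12 N13 N23.
case E12: (odd (size l1) == odd (size l2)).
  exact: even_ucycle_of_paths eC P1 P2 U1 U2 D12 N12 (eqP E12).
case E13: (odd (size l1) == odd (size l3)).
  exact: even_ucycle_of_paths eC P1 P3 U1 U3 D13 N13 (eqP E13).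
apply: even_ucycle_of_paths P2 P3 U2 U3 D23 N23 _ => //.
by move: E12 E13; case: (odd (size l1)); case: (odd (size l2)); case: (odd (size l3)).
Qed.

(* The ear and the two arcs of [c] between its ends form a theta graph; the
   relation [e'] only serves to say that a one-edge ear is a chord of [c]. *)
Lemma ear_even_ucycle e e' c u q w :
  symmetric e -> symmetric e' -> uniq c -> 2 < size c -> cycle e c -> cycle e' c ->
  u \in c -> w \in c -> u != w -> uniq q -> {in q, forall v, v \notin c} ->
  path e u (rcons q w) -> (q = [::] -> ~~ e' u w) ->
  exists d, even_ucycle e d.
Proof.
move=> eC e'C Uc Sc Cc C'c uc wc uw Uq qc Pq Nq.
case: (rot_to_arc Uc uc wc uw) => i a b _ _ Rc.
have Mc v : (v \in c) = (v \in u :: a ++ w :: b) by rewrite -Rc mem_rot.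
have := Uc; rewrite -(rot_uniq i) Rc => Uab; have [Ua Ub] := uniq_arcs Uab.
have := Cc; rewrite -(rot_cycle i) Rc cycle_arcs => /andP [Pa Pb].
have := C'c; rewrite -(rot_cycle i) Rc cycle_arcs => /andP [P'a P'b].
have := Sc; rewrite -(size_rot i) Rc size_arcs => Nab.
have offq v : v \in c -> v \notin q by apply: contraL => /qc.
apply: (theta_even_ucycle eC Pa (rev_path_rcons eC Pb) Pq Ua); rewrite ?rev_eq_nil //.
- by rewrite uniq_rev_path revK.
- by rewrite /= mem_rcons inE negb_or uw !offq //= rcons_uniq offq.
- move=> v va; rewrite mem_rev; apply: contraL va => vb.
  have /and3P [_ /hasPn nab _] : [&& uniq a, ~~ has (mem a) (w :: b) & uniq (w :: b)].
    by move: Uab; rewrite [uniq _]/= cat_uniq => /andP [_ ->].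
  by apply: nab; rewrite inE vb orbT.
- by move=> v va; apply: offq; rewrite Mc inE mem_cat va orbT.
- by move=> v; rewrite mem_rev => vb; apply: offq; rewrite Mc inE mem_cat inE vb !orbT.
- case: (eqVneq q [::]) => [/Nq nuw | _]; last by apply/orP; right.
  apply/orP; left; apply: contraNneq nuw => a0.
  by move: P'a; rewrite a0 /= andbT.
- case: (eqVneq q [::]) => [/Nq nuw | _]; last by apply/orP; right.
  apply/orP; left; apply: contraNneq nuw => b0.
  by move: P'b; rewrite b0 /= andbT e'C.
Qed.

End EvenCycles.

Section Ears.
Variables (T : eqType) (A : {pred T}) (e r : rel T).
Implicit Types (x u w : T) (c p q : seq T).
Hypothesis rA : forall v v', r v v' -> (v \in A) && (v' \in A).

Lemma path_outside_nrel x q w : q != [::] -> {in q, forall v, v \notin A} ->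
  path [rel v v' | ~~ r v v'] x (rcons q w).
Proof.
have nr v v' : (v \notin A) || (v' \notin A) -> ~~ r v v'.
  by apply: contraL => /rA /andP [-> ->].
elim: q x => // y q IH x _ qA /=.
have yA : y \notin A by apply: qA; rewrite mem_head.
rewrite nr ?yA ?orbT //=.
case: q IH qA => [|z q] IH qA; first by rewrite /= andbT nr ?yA.
by apply: IH => // v vq; apply: qA; rewrite inE vq orbT.
Qed.

Lemma path_ear x p :
  x \in A -> last x p \in A -> uniq (x :: p) -> path e x p -> ~~ path r x p ->
  exists u q w, [/\ u \in A, w \in A, uniq (u :: rcons q w),
    {in q, forall v, v \notin A} & path [rel v v' | e v v' && ~~ r v v'] u (rcons q w)].
Proof.
elim: p x => [|y p IH] x xA //= lA U /andP [exy Ps].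
case: (boolP (y \in A)) => yA.
  case: (boolP (r x y)) => rxy /=; last first.
    exists x, [::], y; split=> //=; last by rewrite exy rxy.
    by move: U; rewrite /= !inE negb_or andbT => /andP [/andP [-> _] _].
  by move=> nPs; apply: (IH y) => //; case/andP: U.
have [q [w [p' [E wA qA]]]] : exists q w p',
    [/\ y :: p = rcons q w ++ p', w \in A & {in q, forall v, v \notin A}].
  have : has [in A] (y :: p) by apply/hasP; exists (last y p) => //; apply: mem_last.
  case/split_find => w q p' wA nqA; exists q, w, p'; split=> // v vq.
  by apply/negP => vA; case/hasP: nqA; exists v.
have qn : q != [::] by case: q E {qA} => // [[yw _]]; rewrite yw wA in yA.
move=> _; exists x, q, w; split=> //.
  by move: (U : uniq (x :: y :: p)); rewrite E -cat_cons cat_uniq => /andP [].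
rewrite path_relI path_outside_nrel // andbT.
have : path e x (y :: p) by rewrite /= exy.
by rewrite E cat_path => /andP [].
Qed.

Lemma cycle_ear c z1 z2 :
  uniq c -> cycle e c -> ~~ cycle r c ->
  z1 \in c -> z2 \in c -> z1 \in A -> z2 \in A -> z1 != z2 ->
  exists u q w, [/\ u \in A, w \in A, uniq (u :: rcons q w),
    {in q, forall v, v \notin A} & path [rel v v' | e v v' && ~~ r v v'] u (rcons q w)].
Proof.
move=> Uc Cc nCc z1c z2c z1A z2A z12.
case: (rot_to_arc Uc z1c z2c z12) => i a b _ _ Rc.
have := Uc; rewrite -(rot_uniq i) Rc => /uniq_arcs [Ua Ub].
have := Cc; rewrite -(rot_cycle i) Rc cycle_arcs => /andP [Pa Pb].
move: nCc; rewrite -(rot_cycle i) Rc cycle_arcs negb_and => /orP [nPa | nPb].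
- by apply: (path_ear z1A _ Ua Pa nPa); rewrite last_rcons.
- by apply: (path_ear z2A _ Ub Pb nPb); rewrite last_rcons.
Qed.

End Ears.

(* [la], [lb], [lc] are the interiors of the three paths of a theta graph from
   [s] to [t]; [side_b] says that [e2] contains the [lb]-path minus one edge. *)
Section ThetaWithEar.
Variables (T : eqType) (s t : T) (la lb lc : seq T) (e1 e2 eX : rel T).
Hypotheses (e1C : symmetric e1) (e2C : symmetric e2) (eXC : symmetric eX).
Hypotheses (Ua : uniq (s :: rcons la t)) (Ub : uniq (s :: rcons lb t))
  (Uc : uniq (s :: rcons lc t)).
Hypotheses (Dab : {in la, forall v, v \notin lb}) (Dac : {in la, forall v, v \notin lc})
  (Dbc : {in lb, forall v, v \notin lc}).
Hypotheses (Nac : (la != [::]) || (lc != [::])) (Nbc : (lb != [::]) || (lc != [::])).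
Hypotheses (Pa2 : path e2 s (rcons la t)) (Pc2 : path e2 s (rcons lc t))
  (Pb1 : path e1 s (rcons lb t)) (Pc1 : path e1 s (rcons lc t)).
Hypotheses (PaX : path eX s (rcons la t)) (PbX : path eX s (rcons lb t))
  (PcX : path eX s (rcons lc t)).
Hypothesis side_b : forall b1 v b2,
  lb = b1 ++ v :: b2 -> path e2 s (rcons b1 v) || path e2 v (rcons b2 t).

Local Notation V := (s :: t :: la ++ lb ++ lc).
Local Notation ya := (s :: la ++ t :: rev lc).
Local Notation yb := (s :: lb ++ t :: rev lc).

Lemma mem_theta v : (v \in V) = [|| v == s, v == t, v \in la, v \in lb | v \in lc].
Proof. by rewrite !inE !mem_cat. Qed.

Lemma ear_on_ya u q w :
  u \in ya -> w \in ya -> u != w -> uniq q -> {in q, forall v, v \notin ya} ->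
  path e2 u (rcons q w) -> (q = [::] -> ~~ eX u w) -> exists d, even_ucycle e2 d.
Proof.
apply: ear_even_ucycle e2C eXC (uniq_of_paths Ua Uc Dac) _ (cycle_of_paths e2C Pa2 Pc2)
  (cycle_of_paths eXC PaX PcX).
by rewrite size_arcs rev_eq_nil.
Qed.

Lemma ear_on_yb u q w :
  u \in yb -> w \in yb -> u != w -> uniq q -> {in q, forall v, v \notin yb} ->
  path e1 u (rcons q w) -> (q = [::] -> ~~ eX u w) -> exists d, even_ucycle e1 d.
Proof.
apply: ear_even_ucycle e1C eXC (uniq_of_paths Ub Uc Dbc) _ (cycle_of_paths e1C Pb1 Pc1)
  (cycle_of_paths eXC PbX PcX).
by rewrite size_arcs rev_eq_nil.
Qed.

Lemma lb_notin_ya v : v \in lb -> v \notin ya.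
Proof.
move=> vb; have [_ _ /(_ v vb) /andP [vs vt]] := uniq_path_ends Ub.
rewrite !inE mem_cat inE mem_rev (negbTE vs) (negbTE vt) /= negb_or.
by rewrite Dbc // andbT; apply: contraL vb => /Dab.
Qed.

Lemma ear_through_b x p u q w :
  (x == s) || (x == t) -> uniq (rcons p u) -> {subset rcons p u <= lb} -> w \in la ->
  uniq q -> {in q, forall v, v \notin V} ->
  path e2 x (rcons p u) -> path e2 u (rcons q w) -> exists d, even_ucycle e2 d.
Proof.
move=> xst Up pb wa Uq qV Pp Pq.
have qb v : v \in q -> v \notin lb by move/qV; rewrite mem_theta !negb_or => /and5P [].
have [_ _ /(_ w wa) /andP [ws wt]] := uniq_path_ends Ua.
apply: (ear_on_ya (u := x) (q := p ++ u :: q) (w := w)) => //.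
- by case/orP: xst => /eqP ->; rewrite !inE ?mem_cat ?inE eqxx ?orbT.
- by rewrite !inE mem_cat wa orbT.
- by case/orP: xst => /eqP ->; rewrite eq_sym.
- rewrite -cat_rcons cat_uniq Up Uq andbT; apply/hasPn => v /qb.
  by apply: contra => /pb.
- move=> v; rewrite -cat_rcons mem_cat => /orP [/pb /lb_notin_ya // | vq].
  apply: contra (qV v vq); rewrite mem_theta !inE !mem_cat inE mem_rev.
  by case/or3P => [-> | -> | /orP [-> | ->]]; rewrite ?orbT.
- by rewrite rcons_cat cat_path /= andbA -rcons_path Pp.
- by case: p {Up pb Pp}.
Qed.

Lemma ear_b_to_a u q w :
  u \in lb -> w \in la -> uniq q -> {in q, forall v, v \notin V} ->
  path e2 u (rcons q w) -> exists d, even_ucycle e2 d.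
Proof.
move=> ub wa Uq qV Pq.
have [b1 [b2 Eb]] : exists b1 b2, lb = b1 ++ u :: b2.
  by case/splitPr: ub => b1 b2; exists b1, b2.
have [_ Ulb _] := uniq_path_ends Ub; rewrite Eb in Ulb.
have subb v : v \in b1 ++ u :: b2 -> v \in lb by rewrite Eb.
case/orP: (side_b Eb) => [Ps | Pt].
- apply: (ear_through_b (x := s) (p := b1) (u := u) (q := q) (w := w)) => //.
  + by rewrite eqxx.
  + by move: Ulb; rewrite -cat_rcons cat_uniq => /andP [].
  + by move=> v; rewrite mem_rcons inE => /orP [/eqP -> | vb1]; apply: subb;
      rewrite mem_cat ?inE ?eqxx ?vb1 ?orbT.
- apply: (ear_through_b (x := t) (p := rev b2) (u := u) (q := q) (w := w)) => //.
  + by rewrite eqxx orbT.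
  + by rewrite -rev_cons rev_uniq; move: Ulb; rewrite cat_uniq => /and3P [].
  + by move=> v; rewrite mem_rcons inE mem_rev => /orP [/eqP -> | vb2]; apply: subb;
      rewrite mem_cat inE ?eqxx ?vb2 ?orbT.
  + exact: rev_path_rcons.
Qed.

(* If both ends of the ear lie on [ya] or both on [yb], it closes an even cycle
   there; otherwise one end is inside [la] and the other inside [lb]. *)
Lemma theta_ear_even_ucycle u q w :
  u \in V -> w \in V -> u != w -> uniq q -> {in q, forall v, v \notin V} ->
  path e1 u (rcons q w) -> path e2 u (rcons q w) -> (q = [::] -> ~~ eX u w) ->
  (exists d, even_ucycle e1 d) \/ (exists d, even_ucycle e2 d).
Proof.
move=> uV wV uw Uq qV Pq1 Pq2 Nq.
have off_V (y : seq T) : {subset y <= V} -> {in q, forall v, v \notin y}.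
  by move=> yV v /qV; apply: contra => /yV.
have yaV : {subset ya <= V}.
  by move=> v; rewrite mem_theta !inE mem_cat inE mem_rev => /or4P [] ->; rewrite ?orbT.
have ybV : {subset yb <= V}.
  by move=> v; rewrite mem_theta !inE mem_cat inE mem_rev => /or4P [] ->; rewrite ?orbT.
have in_lb v : v \in V -> v \notin ya -> v \in lb.
  rewrite mem_theta !inE mem_cat inE mem_rev.
  by case: (v == s); case: (v == t); case: (v \in la); case: (v \in lb); case: (v \in lc).
have in_la v : v \in V -> v \notin yb -> v \in la.
  rewrite mem_theta !inE mem_cat inE mem_rev.
  by case: (v == s); case: (v == t); case: (v \in la); case: (v \in lb); case: (v \in lc).
have lb_yb v : v \in lb -> v \in yb by rewrite !inE mem_cat => ->; rewrite orbT.
case: (boolP ((u \in ya) && (w \in ya))) => [/andP [uy wy] | nya].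
  by right; apply: (ear_on_ya uy wy uw Uq (off_V _ yaV) Pq2 Nq).
case: (boolP ((u \in yb) && (w \in yb))) => [/andP [uy wy] | nyb].
  by left; apply: (ear_on_yb uy wy uw Uq (off_V _ ybV) Pq1 Nq).
right; case: (boolP (u \in ya)) => uya.
- have wb : w \in lb by apply: in_lb => //; move: nya; rewrite uya.
  have ua : u \in la by apply: in_la => //; move: nyb; rewrite (lb_yb _ wb) andbT.
  apply: (ear_b_to_a (q := rev q) wb ua); first by rewrite rev_uniq.
    by move=> v; rewrite mem_rev; exact: qV.
  exact: rev_path_rcons.
- have ub := in_lb u uV uya.
  have wa : w \in la by apply: in_la => //; move: nyb; rewrite (lb_yb _ ub).
  exact: (ear_b_to_a ub wa Uq qV Pq2).
Qed.

End ThetaWithEar.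

Lemma path_zip (T : Type) (r : rel T) x p :
  path r x p = all (fun z => r z.1 z.2) (zip (x :: p) p).
Proof. by elim: p x => //= y p IH x; rewrite IH. Qed.

Lemma cycle_zip (T : Type) (r : rel T) c :
  cycle r c = all (fun z => r z.1 z.2) (zip c (rot 1 c)).
Proof.
case: c => // x p; rewrite rot1_cons /= path_zip -rcons_cons.
have zip_rconsl (s t : seq T) a : size s = size t -> zip (rcons s a) t = zip s t.
  by elim: s t => [|y s IH] [|z t] //= [/IH ->].
by rewrite zip_rconsl // size_rcons.
Qed.

Lemma mem_unzip1_zip (T U : eqType) (s : seq T) (t : seq U) v :
  v \in unzip1 (zip s t) -> v \in s.
Proof.
by elim: s t => [|x s IH] [|y t] //=; rewrite !inE => /orP [-> | /IH ->]; rewrite ?orbT.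
Qed.

Lemma next_next_neq (T : eqType) (c : seq T) x :
  uniq c -> 2 < size c -> x \in c -> next c (next c x) != x.
Proof.
move=> Uc Sc xc; case/rot_to: xc => i c1 Rc.
rewrite -!(next_rot i Uc) Rc.
have : uniq (x :: c1) by rewrite -Rc rot_uniq.
have : 2 < size (x :: c1) by rewrite -Rc size_rot.
case: c1 {Rc} => [|y [|z c2]] //= _ /and4P [xyz yz _ _]; rewrite eqxx.
move: xyz yz; rewrite !inE !negb_or => /and3P [xy xz _] /andP [yz _].
by rewrite (eq_sym y x) (negbTE xy) eqxx eq_sym.
Qed.

Section EdgeSets.
Variable T : finType.
Implicit Types (E F : {set {set T}}) (x y v : T) (c p : seq T) (Z : seq (T * T)).

Definition adj E : rel T := fun x y => [set x; y] \in E.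

Lemma adjC E : symmetric (adj E).
Proof. by move=> x y; rewrite /adj setUC. Qed.

Lemma adjS E F : E \subset F -> subrel (adj E) (adj F).
Proof. by move=> /subsetP EF x y /EF. Qed.

Lemma pair_edges_sub E Z :
  ([set [set z.1; z.2] | z in Z] \subset E) = all (fun z => adj E z.1 z.2) Z.
Proof.
apply/subsetP/allP => [sub z zZ | adjZ f /imsetP [z zZ ->]]; last exact: adjZ.
by apply: sub; apply: imset_f.
Qed.

Lemma path_edges_sub E x p : (path_edges (x :: p) \subset E) = path (adj E) x p.
Proof. by rewrite pair_edges_sub path_zip. Qed.

Lemma cycle_edges_sub E c : (cycle_edges c \subset E) = cycle (adj E) c.
Proof. by rewrite pair_edges_sub cycle_zip. Qed.

(* Two consecutive pairs of a cycle span the same edge only if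
   [next (next a) = a], which needs a cycle of length two. *)
Lemma card_cycle_edges c : uniq c -> 2 < size c -> #|cycle_edges c| = size c.
Proof.
move=> Uc Sc; have Z1 : unzip1 (zip c (rot 1 c)) = c by rewrite unzip1_zip ?size_rot.
have zipP z : z \in zip c (rot 1 c) -> z.1 \in c /\ next c z.1 = z.2.
  move=> zc; split; first by rewrite -Z1; apply: map_f.
  by have := cycle_next Uc; rewrite cycle_zip => /allP /(_ z zc) /eqP.
rewrite /cycle_edges card_in_imset; last first.
  move=> [a b] [a' b'] /zipP [/= ac ab] /zipP [/= _ ab'] E.
  have : a \in [set a'; b'] by rewrite -E !inE eqxx.
  rewrite !inE => /orP [/eqP aa' | /eqP ab'']; first by rewrite -ab -ab' aa'.
  have : a' \in [set a; b] by rewrite E !inE eqxx.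
  rewrite !inE => /orP [/eqP a'a | /eqP a'b]; first by rewrite -ab -ab' a'a.
  by have := next_next_neq Uc Sc ac; rewrite ab -a'b ab' -ab'' eqxx.
by rewrite (card_uniqP (zip_uniql _ Uc)) size_zip size_rot minnn.
Qed.

Lemma path_split_avoiding (e e' : rel T) (f : {set T}) s t b1 v b2 :
  #|f| = 2 -> (forall x y, e x y -> [set x; y] != f -> e' x y) ->
  uniq (s :: rcons (b1 ++ v :: b2) t) -> path e s (rcons (b1 ++ v :: b2) t) ->
  path e' s (rcons b1 v) || path e' v (rcons b2 t).
Proof.
move=> f2 ee'; rewrite rcons_cat rcons_cons -cat_rcons -cat_cons cat_uniq cat_path last_rcons.
set L := s :: rcons b1 v => /and3P [_ nLR _] /andP [PL PR].
have LR x : x \in L -> x \in v :: rcons b2 t -> x = v.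
  by move=> xL; rewrite inE => /orP [/eqP // | xR]; case/hasP: nLR; exists x.
case: (boolP (f \subset [set x | x \in L])) => fL; apply/orP; [right | left].
- apply: (sub_in_path (P := mem (v :: rcons b2 t))) PR => [x y xR yR exy |]; last exact/allP.
  apply: ee' exy _; apply/eqP => fxy; move/subsetP: fL; rewrite -fxy => sub.
  have xL : x \in L by have := sub x; rewrite !inE eqxx => /(_ isT).
  have yL : y \in L by have := sub y; rewrite !inE eqxx orbT => /(_ isT).
  by move: f2; rewrite -fxy (LR x xL xR) (LR y yL yR) setUid cards1.
- apply: (sub_in_path (P := mem L)) PL => [x y xL yL exy |]; last exact/allP.
  apply: ee' exy _; apply: contraNneq fL => <-.
  by apply/subsetP => z; rewrite !inE => /orP [] /eqP ->.
Qed.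

End EdgeSets.

Section ColoredGraphs.
Variables T K : finType.
Implicit Types (G H C X F : cgraph T K) (x y v : T) (c p : seq T) (Z : seq (T * T)).

Lemma EdgS G H : G \subset H -> Edg G \subset Edg H.
Proof. exact: imsetS. Qed.

Lemma Vtx_setU G H : Vtx (G :|: H) = Vtx G :|: Vtx H.
Proof. exact: bigcup_setU. Qed.

Lemma Vtx_pair_edges G Z :
  Edg G = [set [set z.1; z.2] | z in Z] -> Vtx G =i unzip1 Z ++ unzip2 Z.
Proof.
move=> EG v; rewrite mem_cat; apply/bigcupP/orP => [[f fG vf] | ].
  have : f.1 \in Edg G by apply: imset_f.
  rewrite EG => /imsetP [z zZ fz]; move: vf; rewrite fz !inE => /orP [] /eqP ->.
  - by left; apply: map_f.
  - by right; apply: map_f.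
have edgeZ z : z \in Z -> exists2 f, f \in G & f.1 = [set z.1; z.2].
  move=> zZ; have : [set z.1; z.2] \in Edg G by rewrite EG; apply: imset_f.
  by case/imsetP => f fG ->; exists f.
case=> /mapP [z zZ ->]; have [f fG fz] := edgeZ z zZ.
  by exists f; rewrite // fz !inE eqxx.
by exists f; rewrite // fz !inE eqxx orbT.
Qed.

Lemma Vtx_cycle G c : Edg G = cycle_edges c -> Vtx G =i c.
Proof.
move=> /Vtx_pair_edges VG v.
by rewrite VG unzip1_zip ?size_rot // unzip2_zip ?size_rot // mem_cat mem_rot orbb.
Qed.

Lemma Vtx_path G x p : Edg G = path_edges (x :: p) -> p != [::] -> Vtx G =i x :: p.
Proof.
move=> /Vtx_pair_edges VG pn v; rewrite VG unzip2_zip ?leqnSn // mem_cat.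
apply/orP/idP => [[/mem_unzip1_zip // | vp] | ]; first by rewrite inE vp orbT.
case: p pn {VG} => // y p _; rewrite inE => /orP [/eqP -> | vp]; last by right.
by left; rewrite /= inE eqxx.
Qed.

Lemma adj_Vtx G x y : adj (Edg G) x y -> (x \in Vtx G) && (y \in Vtx G).
Proof.
case/imsetP => f fG fxy; apply/andP; split; apply/bigcupP; exists f => //;
  by rewrite -fxy !inE eqxx ?orbT.
Qed.

Lemma rainbowP G : rainbow G <-> {in G &, injective (fun f : cedge T K => f.2)}.
Proof.
rewrite /rainbow /Col; split => [RG | injG]; first by apply/imset_injP; rewrite RG.
exact: card_in_imset.
Qed.

Lemma rainbowS G H : G \subset H -> rainbow H -> rainbow G.
Proof.
by move=> /subsetP GH /rainbowP RH; apply/rainbowP => f g /GH fH /GH gH; apply: RH.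
Qed.

Lemma almost_rainbow_twins G : almost_rainbow G ->
  exists f g, [/\ f \in G, g \in G, f != g & f.2 = g.2].
Proof.
move=> AR; case: (boolP [exists f in G, exists g in G, (f != g) && (f.2 == g.2)]).
  by case/exists_inP => f fG /exists_inP [g gG /andP [fg /eqP fgc]]; exists f, g.
move=> none; suff : rainbow G by rewrite /rainbow -AR => /n_Sn.
apply/rainbowP => f g fG gG fgc; apply/eqP; apply: contraNT none => fg.
by apply/exists_inP; exists f => //; apply/exists_inP; exists g => //; rewrite fg fgc /=.
Qed.

Lemma rainbow_setD1 G f g : almost_rainbow G -> f \in G -> g \in G -> f != g -> f.2 = g.2 ->
  rainbow (G :\ f).
Proof.
move=> AR fG gG fg fgc; have ColD : Col (G :\ f) = Col G.
  apply/setP => k; apply/imsetP/imsetP => [[h /setD1P [_ hG] ->] | [h hG ->]].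
    by exists h.
  case: (eqVneq h f) => [-> | hf]; last by exists h; rewrite // !inE hf.
  by exists g; rewrite // !inE eq_sym fg.
by rewrite /rainbow ColD; move: AR; rewrite /almost_rainbow (cardsD1 f G) fG add1n => -[].
Qed.

Definition outer C X : cgraph T K := [set f in C | f.1 \notin Edg X].

Lemma Edg_outer C X : Edg (outer C X) = Edg C :\: Edg X.
Proof.
apply/setP => e; rewrite inE; apply/imsetP/andP => [[f] | [eX /imsetP [f fC fe]]].
  by rewrite inE => /andP [fC fX] ->; split; last exact: imset_f.
by exists f; rewrite // inE fC -fe.
Qed.

Lemma adj_outer C X x y : adj (Edg (outer C X)) x y = adj (Edg C) x y && ~~ adj (Edg X) x y.
Proof. by rewrite /adj Edg_outer inE andbC. Qed.

Lemma outer_sub C X : outer C X \subset C :\: X.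
Proof.
apply/subsetP => f; rewrite !inE => /andP [fC fX]; rewrite fC andbT.
by apply: contra fX => fX; apply: imset_f.
Qed.

Lemma graph_outerU C X F :
  is_graph C -> is_graph X -> F \subset X -> is_graph (F :|: outer C X).
Proof.
move=> [C2 Cinj] [X2 Xinj] /subsetP FX.
have inU f : f \in F :|: outer C X -> (f \in X) \/ (f \in C /\ f.1 \notin Edg X).
  by rewrite !inE => /orP [/FX | /andP []]; [left | right].
split=> [f /inU [/X2 | [/C2]] // | f g /inU [fX | [fC fX]] /inU [gX | [gC gX]] fg].
- exact: Xinj.
- by rewrite -fg imset_f in gX.
- by rewrite fg imset_f in fX.
- exact: Cinj.
Qed.

Lemma rainbow_outerU C X F : rainbow C -> F \subset X -> rainbow F ->
  Col X :&: Col (C :\: X) = set0 -> rainbow (F :|: outer C X).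
Proof.
move=> /rainbowP RC /subsetP FX /rainbowP RF CX.
have /subsetP OC := outer_sub C X.
have nocol f g : f \in F -> g \in outer C X -> f.2 != g.2.
  move=> fF gO; apply/eqP => fg.
  have : f.2 \in Col X :&: Col (C :\: X) by rewrite inE imset_f ?FX //= fg imset_f ?OC.
  by rewrite CX inE.
apply/rainbowP => f g; rewrite !in_setU => /orP [fF | fO] /orP [gF | gO] fg.
- exact: RF.
- by move: (nocol f g fF gO); rewrite fg eqxx.
- by move: (nocol g f gF fO); rewrite fg eqxx.
- by apply: RC => //; [move: (OC f fO) | move: (OC g gO)]; rewrite inE => /andP [].
Qed.

Lemma even_cycle_of_ucycle H c : is_graph H -> rainbow H -> even_ucycle (adj (Edg H)) c ->
  exists D, [/\ even_cycle D, rainbow D & D \subset H].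
Proof.
move=> [H2 Hinj] RH /and3P [/andP [Cc Uc] Sc Ec].
pose D := [set f in H | f.1 \in cycle_edges c].
have DH : D \subset H by apply/subsetP => f; rewrite inE => /andP [].
have injD : {in D &, injective (fun f : cedge T K => f.1)}.
  by move=> f g; rewrite !inE => /andP [fH _] /andP [gH _]; apply: Hinj.
have ED : Edg D = cycle_edges c.
  apply/setP => e; apply/imsetP/idP => [[f] | ec]; first by rewrite inE => /andP [_ ?] ->.
  have /subsetP /(_ e ec) /imsetP [f fH fe] : cycle_edges c \subset Edg H.
    by rewrite cycle_edges_sub.
  by exists f; rewrite // inE fH -fe.
have GD : is_graph D.
  by split=> [f /(subsetP DH) /H2 | f g fD gD]; last exact: injD.
have cardD : #|D| = size c by rewrite -(card_in_imset injD) -/(Edg D) ED card_cycle_edges.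
exists D; split=> //; last exact: rainbowS DH RH.
by split; [split=> //; exists c | rewrite cardD].
Qed.

Lemma outer_even_cycle C X F c :
  is_graph C -> is_graph X -> rainbow C -> F \subset X -> rainbow F ->
  Col X :&: Col (C :\: X) = set0 -> even_ucycle (adj (Edg (F :|: outer C X))) c ->
  exists D, [/\ even_cycle D, rainbow D & D \subset C :|: X].
Proof.
move=> GC GX RC FX RF CX.
case/(even_cycle_of_ucycle (graph_outerU GC GX FX) (rainbow_outerU RC FX RF CX)) => D [ED RD DH].
exists D; split=> //; apply: subset_trans DH _; apply/subsetP => f.
rewrite !in_setU => /orP [/(subsetP FX) -> | /(subsetP (outer_sub C X))]; first by rewrite orbT.
by rewrite inE => /andP [_ ->].
Qed.

Lemma outer_path_nonadj C X u q w :
  path (adj (Edg (outer C X))) u (rcons q w) -> q = [::] -> ~~ adj (Edg X) u w.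
Proof. by move=> Pq q0; move: Pq; rewrite q0 /= adj_outer => /andP [/andP [_ ->]]. Qed.

Definition ear G (A : {set T}) u q w : Prop :=
  [/\ u \in A, w \in A, uniq (u :: rcons q w), {in q, forall v, v \notin A}
    & path (adj (Edg G)) u (rcons q w)].

Lemma outer_ear C X : is_cycle C -> Edg C :\: Edg X != set0 -> 1 < #|Vtx C :&: Vtx X| ->
  exists u q w, ear (outer C X) (Vtx X) u q w.
Proof.
move=> [_ [c [Uc _ EC]]] nCX /card_gt1P [z1 [z2 [z1CX z2CX z12]]].
move: z1CX z2CX; rewrite !inE !(Vtx_cycle EC) => /andP [z1c z1X] /andP [z2c z2X].
have Cc : cycle (adj (Edg C)) c by rewrite -cycle_edges_sub EC.
have nCc : ~~ cycle (adj (Edg X)) c by rewrite -cycle_edges_sub -EC -setD_eq0.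
have [u [q [w [uX wX Uq qX Pq]]]] :=
  cycle_ear (@adj_Vtx X) Uc Cc nCc z1c z2c z1X z2X z12.
by exists u, q, w; split=> //; apply: sub_path Pq => v v'; rewrite adj_outer.
Qed.

Lemma rainbow_cycle_ear C X u q w :
  is_graph C -> rainbow C -> is_cycle X -> rainbow X -> Col X :&: Col (C :\: X) = set0 ->
  ear (outer C X) (Vtx X) u q w -> exists D, [/\ even_cycle D, rainbow D & D \subset C :|: X].
Proof.
move=> GC RC [GX [x [Ux Sx EX]]] RX CX [uX wX Uqw qX Pq].
have [uw Uq _] := uniq_path_ends Uqw.
have Cx : cycle (adj (Edg X)) x by rewrite -cycle_edges_sub EX.
have VX := Vtx_cycle EX.
have [d Ed] : exists d, even_ucycle (adj (Edg (X :|: outer C X))) d.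
  apply: (ear_even_ucycle (u := u) (q := q) (w := w) (adjC _) (adjC _) Ux Sx _ Cx);
    rewrite -?VX //.
  - exact: sub_cycle (adjS (EdgS (subsetUl _ _))) _ Cx.
  - by move=> v /qX; rewrite VX.
  - exact: sub_path (adjS (EdgS (subsetUr _ _))) _ _ Pq.
  - exact: outer_path_nonadj Pq.
exact: outer_even_cycle GC GX RC (subxx X) RX CX Ed.
Qed.

End ColoredGraphs.

Section ThetaGraphs.
Variables T K : finType.
Implicit Types (C X F P Q : cgraph T K) (s t : T) (l m : seq T).

Lemma is_path_seq P s t : is_path P s t ->
  exists l, [/\ uniq (s :: rcons l t), path (adj (Edg P)) s (rcons l t),
                Vtx P =i s :: rcons l t & (l = [::] -> [set s; t] \in Edg P)].
Proof.
case=> _ [q [st Uq lq EP]].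
case/lastP: q Uq lq EP => [|l x]; first by move=> _ /= ts; rewrite ts eqxx in st.
rewrite last_rcons => Uq xt EP; subst x; exists l; split=> //.
- by rewrite -path_edges_sub EP.
- by apply: Vtx_path EP _; rewrite -size_eq0 size_rcons.
- by move=> l0; rewrite EP l0; apply/imsetP; exists (s, t); rewrite ?inE.
Qed.

Lemma theta_ofC12 (G P1 P2 P3 : cgraph T K) s t :
  theta_of G P1 P2 P3 s t -> theta_of G P2 P1 P3 s t.
Proof.
case=> GG EG [p1 p2 p3] [v12 v13 v23] [e12 e13 e23].
by split=> //; [rewrite EG (setUC P1) | split; rewrite // setIC | split; rewrite // setIC].
Qed.

Lemma theta_ofC23 (G P1 P2 P3 : cgraph T K) s t :
  theta_of G P1 P2 P3 s t -> theta_of G P1 P3 P2 s t.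
Proof.
case=> GG EG [p1 p2 p3] [v12 v13 v23] [e12 e13 e23].
by split=> //; [rewrite EG setUAC | split; rewrite // setIC | split; rewrite // setIC].
Qed.

Lemma interiors_disjoint P Q s t l m :
  uniq (s :: rcons l t) -> Vtx P =i s :: rcons l t -> Vtx Q =i s :: rcons m t ->
  Vtx P :&: Vtx Q \subset [set s; t] -> {in l, forall v, v \notin m}.
Proof.
move=> /uniq_path_ends [_ _ lst] VP VQ /subsetP PQ v vl; apply/negP => vm.
have := PQ v; rewrite inE VP VQ !inE !mem_rcons !inE vl vm !orbT => /(_ isT).
by move: (lst v vl) => /andP [/negbTE -> /negbTE ->].
Qed.

Lemma interiors_nonempty P Q s t l m :
  (l = [::] -> [set s; t] \in Edg P) -> (m = [::] -> [set s; t] \in Edg Q) ->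
  Edg P :&: Edg Q = set0 -> (l != [::]) || (m != [::]).
Proof.
case: l => [/(_ erefl) stP|//]; case: m => [/(_ erefl) stQ|//] PQ.
have : [set s; t] \in Edg P :&: Edg Q by rewrite inE stP.
by rewrite PQ inE.
Qed.

Lemma theta_of_seqs X Pa Pb Pc s t : theta_of X Pa Pb Pc s t ->
  exists la lb lc,
  [/\ [/\ uniq (s :: rcons la t), uniq (s :: rcons lb t) & uniq (s :: rcons lc t)],
      [/\ path (adj (Edg Pa)) s (rcons la t), path (adj (Edg Pb)) s (rcons lb t)
        & path (adj (Edg Pc)) s (rcons lc t)],
      [/\ {in la, forall v, v \notin lb}, {in la, forall v, v \notin lc}
        & {in lb, forall v, v \notin lc}],
      [/\ (la != [::]) || (lb != [::]), (la != [::]) || (lc != [::])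
        & (lb != [::]) || (lc != [::])]
    & Vtx X =i s :: t :: la ++ lb ++ lc].
Proof.
case=> _ EX [pa pb pc] [Vab Vac Vbc] [Eab Eac Ebc].
have [la [Ua Pla Va Na]] := is_path_seq pa.
have [lb [Ub Plb Vb Nb]] := is_path_seq pb.
have [lc [Uc Plc Vc Nc]] := is_path_seq pc.
exists la, lb, lc; split.
- by split.
- by split.
- by split; apply: interiors_disjoint; eassumption.
- by split; apply: interiors_nonempty; eassumption.
move=> v; rewrite EX !Vtx_setU !inE Va Vb Vc !inE !mem_cat !mem_rcons !inE.
by case: (v == s); case: (v == t); case: (v \in la); case: (v \in lb); case: (v \in lc).
Qed.

Lemma adj_setD1 X P f : P \subset X ->
  forall x y, adj (Edg P) x y -> [set x; y] != f.1 -> adj (Edg (X :\ f)) x y.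
Proof.
move=> /subsetP PX x y /imsetP [g gP gxy] nf; rewrite /adj gxy; apply: imset_f.
by rewrite !inE PX // andbT; apply: contraNneq nf => gf; rewrite gxy gf.
Qed.

Lemma disjoint_edges_setD1 X P Q f : Q \subset X -> f \in P -> Edg P :&: Edg Q = set0 ->
  Q \subset X :\ f.
Proof.
move=> QX fP PQ; rewrite subsetD1 QX /=; apply/negP => fQ.
have : f.1 \in Edg P :&: Edg Q by rewrite inE !imset_f.
by rewrite PQ inE.
Qed.

Lemma theta_ear C X Pa Pb Pc s t f1 f2 u q w :
  is_graph C -> rainbow C -> Col X :&: Col (C :\: X) = set0 ->
  theta_of X Pa Pb Pc s t -> f1 \in Pa -> f2 \in Pb ->
  rainbow (X :\ f1) -> rainbow (X :\ f2) -> ear (outer C X) (Vtx X) u q w ->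
  exists D, [/\ even_cycle D, rainbow D & D \subset C :|: X].
Proof.
move=> GC RC CX Th f1a f2b R1 R2 [uX wX Uqw qX Pq].
have [la [lb [lc [[Ua Ub Uc] [Pla Plb Plc] [Dab Dac Dbc] [_ Nac Nbc] VX]]]] :=
  theta_of_seqs Th.
case: Th => GX EX _ _ [Eab Eac Ebc].
have [uw Uq _] := uniq_path_ends Uqw.
have aX : Pa \subset X by rewrite EX -setUA subsetUl.
have bX : Pb \subset X by rewrite EX setUAC subsetUr.
have cX : Pc \subset X by rewrite EX subsetUr.
set X2 := X :\ f2 :|: outer C X.
have lift F P : P \subset F -> subrel (adj (Edg P)) (adj (Edg (F :|: outer C X))).
  by move=> PF; apply/adjS/EdgS/(subset_trans PF)/subsetUl.
have liftO F : subrel (adj (Edg (outer C X))) (adj (Edg (F :|: outer C X))).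
  exact/adjS/EdgS/subsetUr.
have Pb1 := sub_path (lift _ _ (disjoint_edges_setD1 bX f1a Eab)) Plb.
have Pc1 := sub_path (lift _ _ (disjoint_edges_setD1 cX f1a Eac)) Plc.
have Pa2 := sub_path (lift _ _ (disjoint_edges_setD1 aX f2b (etrans (setIC _ _) Eab))) Pla.
have Pc2 := sub_path (lift _ _ (disjoint_edges_setD1 cX f2b Ebc)) Plc.
have side b1 v b2 : lb = b1 ++ v :: b2 ->
    path (adj (Edg X2)) s (rcons b1 v) || path (adj (Edg X2)) v (rcons b2 t).
  move=> Eb; apply: (path_split_avoiding (e := adj (Edg Pb)) (f := f2.1)).
  - exact: (proj1 GX) f2 (subsetP bX f2 f2b).
  - by move=> x y /(adj_setD1 bX) Hxy /Hxy; apply: lift.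
  - by rewrite -Eb.
  - by rewrite -Eb.
have uV : u \in s :: t :: la ++ lb ++ lc by rewrite -VX.
have wV : w \in s :: t :: la ++ lb ++ lc by rewrite -VX.
have qV : {in q, forall v, v \notin s :: t :: la ++ lb ++ lc} by move=> v /qX; rewrite VX.
have [[d Ed] | [d Ed]] :=
  theta_ear_even_ucycle (adjC _) (adjC _) (adjC (Edg X)) Ua Ub Uc Dab Dac Dbc Nac Nbc
    Pa2 Pc2 Pb1 Pc1 (sub_path (adjS (EdgS aX)) Pla) (sub_path (adjS (EdgS bX)) Plb)
    (sub_path (adjS (EdgS cX)) Plc) side uV wV uw Uq qV
    (sub_path (liftO _) Pq) (sub_path (liftO _) Pq) (outer_path_nonadj Pq).
- exact: outer_even_cycle GC GX RC (subD1set X f1) R1 CX Ed.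
- exact: outer_even_cycle GC GX RC (subD1set X f2) R2 CX Ed.
Qed.

Lemma bad_piece_ear C X u q w :
  is_graph C -> rainbow C -> bad_piece X -> Col X :&: Col (C :\: X) = set0 ->
  ear (outer C X) (Vtx X) u q w -> exists D, [/\ even_cycle D, rainbow D & D \subset C :|: X].
Proof.
move=> GC RC [AR _ [P1 [P2 [P3 [s [t [Th R1 R2 R3]]]]]]] CX E.
have [f1 [f2 [f1X f2X f12 c12]]] := almost_rainbow_twins AR.
have inP f : f \in X -> [\/ f \in P1, f \in P2 | f \in P3].
  case: Th => _ -> _ _ _; rewrite !inE => /orP [/orP [] | ] ?;
    by [constructor 1 | constructor 2 | constructor 3].
have apart P : rainbow P -> f1 \in P -> f2 \in P -> False.
  by move=> /rainbowP RP f1P f2P; move/eqP: f12; apply; apply: RP.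
have [Pa [Pb [Pc [ThX f1a f2b]]]] :
    exists Pa Pb Pc, [/\ theta_of X Pa Pb Pc s t, f1 \in Pa & f2 \in Pb].
  have Th213 := theta_ofC12 Th; have Th132 := theta_ofC23 Th.
  have Th231 := theta_ofC23 Th213; have Th312 := theta_ofC12 Th132.
  have Th321 := theta_ofC12 Th231.
  case: (inP f1 f1X) => h1; case: (inP f2 f2X) => h2;
    by [case: (apart _ R1 h1 h2) | case: (apart _ R2 h1 h2) | case: (apart _ R3 h1 h2)
       | exists P1, P2, P3 | exists P1, P3, P2 | exists P2, P1, P3 | exists P2, P3, P1
       | exists P3, P1, P2 | exists P3, P2, P1].
apply: theta_ear GC RC CX ThX f1a f2b _ _ E.
- exact: rainbow_setD1 AR f1X f2X f12 c12.
- by apply: rainbow_setD1 AR f2X f1X _ (esym c12); rewrite eq_sym.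
Qed.

End ThetaGraphs.

Theorem lemma2p5 (T K : finType) (C X : cgraph T K) :
  is_cycle C -> rainbow C ->
  ((is_cycle X /\ rainbow X) \/ bad_piece X) ->
  Col X :&: Col (C :\: X) = set0 ->
  Edg C :\: Edg X != set0 ->
  2 <= #|Vtx C :&: Vtx X| ->
  exists D : cgraph T K, [/\ even_cycle D, rainbow D & D \subset C :|: X].
Proof.
move=> CC RC HX CX nCX VCX.
have [u [q [w E]]] := outer_ear CC nCX VCX.
case: HX => [[CyX RX] | BX].
- exact: rainbow_cycle_ear (proj1 CC) RC CyX RX CX E.
- exact: bad_piece_ear (proj1 CC) RC BX CX E.
Qed.
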